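(* Let $\gamma\in\mathcal{K}^{\mathcal{P}^{-1}}$ and $\Psi\in\mathcal{K}_{\mathrm{FxT}}$. Then there exist $\lambda\ge1$ and $\tilde\Psi\in\mathcal{K}_{\mathrm{FxT}}$ such that $\lambda\gamma^{\lambda-1}(s)\gamma'(s)\Psi(s)\ge\tilde\Psi(\gamma^\lambda(s))$ for all $s>0$.
   Context: $\mathcal{K}_\infty$ is the set of continuous strictly increasing unbounded $\alpha:\mathbb{R}_{\ge0}\to\mathbb{R}_{\ge0}$ with $\alpha(0)=0$. $\mathcal{K}^{\mathcal{P}}$ is the set of $\alpha\in\mathcal{K}_\infty$ of the form $\alpha(s)=\sum_{i=1}^nc_is^{p_i}$ with real $c_i\neq0$, $p_i>0$, and $\alpha'(s)>0$ for all $s>0$. $\mathcal{K}^{\mathcal{P}^{-1}}$ is the set of $\alpha\in\mathcal{K}_\infty$ with $\alpha^{-1}\in\mathcal{K}^{\mathcal{P}}$. $\mathcal{K}_{\mathrm{FxT}}$ is the set of functions $c_1s^{p_1}+c_2s^{p_2}$ with $c_1,c_2>0$, $p_1\in(0,1)$, $p_2>1$. $\gamma^\lambda(s)$ denotes $(\gamma(s))^\lambda$. *)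

From Stdlib Require Import Reals Lra List.
From Coquelicot Require Import Coquelicot.
Open Scope R_scope.

(* s^p for s >= 0 and p > 0, with the convention 0^p = 0. *)
Definition rpow (x y : R) : R := if Rle_dec x 0 then 0 else Rpower x y.

(* K_infinity: functions R>=0 -> R>=0 (represented as R -> R, only values on
   [0,oo) matter): continuous, strictly increasing, unbounded, alpha 0 = 0. *)
Definition K_inf (a : R -> R) : Prop :=
  a 0 = 0 /\
  (forall s, 0 <= s -> 0 <= a s) /\
  (forall x, 0 <= x ->
     filterlim a (within (fun y => 0 <= y) (locally x)) (locally (a x))) /\
  (forall x y, 0 <= x -> x < y -> a x < a y) /\
  (forall M, exists s, 0 <= s /\ M < a s).

Definition gen_poly (l : list (R * R)) (s : R) : R :=
  fold_right (fun cp acc => fst cp * rpow s (snd cp) + acc) 0 l.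

Definition K_P (a : R -> R) : Prop :=
  K_inf a /\
  exists l : list (R * R),
    List.Forall (fun cp => fst cp <> 0 /\ 0 < snd cp) l /\
    (forall s, 0 <= s -> a s = gen_poly l s) /\
    (forall s, 0 < s -> 0 < Derive a s).

Definition K_Pinv (a : R -> R) : Prop :=
  K_inf a /\
  exists b : R -> R, K_P b /\
    (forall s, 0 <= s -> b (a s) = s) /\
    (forall s, 0 <= s -> a (b s) = s).

Definition K_FxT (P : R -> R) : Prop :=
  exists c1 c2 p1 p2 : R,
    0 < c1 /\ 0 < c2 /\ 0 < p1 < 1 /\ 1 < p2 /\
    forall s, 0 <= s -> P s = c1 * rpow s p1 + c2 * rpow s p2.

(* Take lambda = 1.  The inverse b of gamma is a generalized polynomial, and with
   t = gamma s we have s = b t and gamma'(s) = 1 / b'(t), so the left-hand side is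
   Psi(b t) / b'(t).  After merging equal exponents, b t = c t^a + ... + C t^A with
   0 < a < ... < A, and positivity of b forces c, C > 0.  Hence b t >= k t^a and
   b'(t) <= E t^(a-1) on (0,1], while b t >= k t^A and b'(t) <= E t^(A-1) on [1,oo).
   Since Psi(s) >= c1 s^p1 and Psi(s) >= c2 s^p2, the quotient is at least a multiple
   of t^(1 - a (1 - p1)) near 0 and of t^(1 + A (p2 - 1)) near oo; the first exponent
   is below 1 and the second above 1, so a K_FxT function fits underneath. *)

From Stdlib Require Import Reals Lra List Sorting.
From Coquelicot Require Import Coquelicot.
Open Scope R_scope.

Lemma rpow_Rpower x y : 0 < x -> rpow x y = Rpower x y.
Proof. intros Hx; unfold rpow; destruct (Rle_dec x 0); [lra | reflexivity]. Qed.

Lemma Rpower_pos x y : 0 < Rpower x y.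
Proof. apply exp_pos. Qed.

Lemma Rpower_le_exponent t p q :
  0 < t -> (p - q) * ln t <= 0 -> Rpower t p <= Rpower t q.
Proof.
  intros Ht Hpq; unfold Rpower.
  destruct (Rle_lt_or_eq_dec (p * ln t) (q * ln t)) as [Hlt | ->]; [nra | | lra].
  now left; apply exp_increasing.
Qed.

Lemma Rpower_le_exponent_le1 t p q : 0 < t <= 1 -> q <= p -> Rpower t p <= Rpower t q.
Proof.
  intros Ht Hqp; apply Rpower_le_exponent; [lra |].
  assert (ln t <= 0) by (rewrite <- ln_1; apply ln_le; lra); nra.
Qed.

Lemma Rpower_Rinv_opp t p : 0 < t -> Rpower (/ t) (- p) = Rpower t p.
Proof. intros Ht; unfold Rpower; rewrite ln_Rinv by exact Ht; f_equal; ring. Qed.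

Lemma Rpower_le_below_root u e t :
  0 < u -> 0 < e -> 0 < t <= Rpower u (/ e) -> Rpower t e <= u.
Proof.
  intros Hu He Ht.
  apply Rle_trans with (Rpower (Rpower u (/ e)) e).
  - apply Rle_Rpower_l; lra.
  - rewrite Rpower_mult, Rinv_l, Rpower_1 by lra; lra.
Qed.

Definition proper_term (cp : R * R) : Prop := fst cp <> 0 /\ 0 < snd cp.

Definition exponent_lt (x y : R * R) : Prop := snd x < snd y.

Lemma gen_poly_app l1 l2 t : gen_poly (l1 ++ l2) t = gen_poly l1 t + gen_poly l2 t.
Proof. induction l1 as [| cp l1 IH]; simpl; [ring | rewrite IH; ring]. Qed.

Fixpoint insert_term (x : R * R) (l : list (R * R)) : list (R * R) :=
  match l with
  | nil => x :: nil
  | y :: l' =>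
      match total_order_T (snd x) (snd y) with
      | inleft (left _) => x :: l
      | inleft (right _) =>
          if Req_EM_T (fst x + fst y) 0 then l' else (fst x + fst y, snd y) :: l'
      | inright _ => y :: insert_term x l'
      end
  end.

Lemma gen_poly_insert_term x l t :
  gen_poly (insert_term x l) t = fst x * rpow t (snd x) + gen_poly l t.
Proof.
  induction l as [| y l IH]; simpl; [reflexivity |].
  destruct (total_order_T (snd x) (snd y)) as [[Hlt | Heq] | Hgt]; simpl.
  - reflexivity.
  - rewrite Heq; destruct (Req_EM_T (fst x + fst y) 0) as [Hz | Hz]; simpl.
    + replace (fst y) with (- fst x) by lra; ring.
    + ring.
  - rewrite IH; ring.
Qed.

Lemma insert_term_proper x l :
  proper_term x -> List.Forall proper_term l -> List.Forall proper_term (insert_term x l).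
Proof.
  intros Hx; induction l as [| y l IH]; intros Hl; simpl; [now constructor |].
  inversion Hl as [| ? ? Hy Hl']; subst.
  destruct (total_order_T (snd x) (snd y)) as [[Hlt | Heq] | Hgt].
  - now constructor.
  - destruct (Req_EM_T (fst x + fst y) 0); [exact Hl' |].
    constructor; [split; [assumption | apply Hy] | exact Hl'].
  - constructor; auto.
Qed.

Lemma insert_term_above z x l :
  exponent_lt z x -> List.Forall (exponent_lt z) l -> List.Forall (exponent_lt z) (insert_term x l).
Proof.
  intros Hzx; induction l as [| y l IH]; intros Hl; simpl; [now constructor |].
  inversion Hl as [| ? ? Hzy Hl']; subst.
  destruct (total_order_T (snd x) (snd y)) as [[Hlt | Heq] | Hgt].
  - now constructor.
  - destruct (Req_EM_T (fst x + fst y) 0); [exact Hl' |].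
    now constructor.
  - constructor; auto.
Qed.

Lemma insert_term_sorted x l :
  StronglySorted exponent_lt l -> StronglySorted exponent_lt (insert_term x l).
Proof.
  induction l as [| y l IH]; intros Hl; simpl; [now repeat constructor |].
  apply StronglySorted_inv in Hl as [Hl Hy].
  destruct (total_order_T (snd x) (snd y)) as [[Hlt | Heq] | Hgt].
  - constructor; [now constructor | constructor; [exact Hlt |]].
    refine (Forall_impl _ _ Hy); unfold exponent_lt; intros; lra.
  - destruct (Req_EM_T (fst x + fst y) 0); [exact Hl |].
    now constructor.
  - constructor; [now apply IH | now apply insert_term_above].
Qed.

Lemma gen_poly_normal_form l :
  List.Forall proper_term l ->
  exists L, List.Forall proper_term L /\ StronglySorted exponent_lt L /\
    forall t, gen_poly L t = gen_poly l t.
Proof.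
  induction l as [| x l IH]; intros Hl.
  - exists nil; repeat constructor.
  - inversion Hl as [| ? ? Hx Hl']; subst.
    destruct (IH Hl') as (L & HLp & HLs & HLv).
    exists (insert_term x L); split; [| split].
    + now apply insert_term_proper.
    + now apply insert_term_sorted.
    + intros t; rewrite gen_poly_insert_term, HLv; reflexivity.
Qed.

Lemma StronglySorted_app_last {A} (Rel : A -> A -> Prop) l x :
  StronglySorted Rel (l ++ x :: nil) -> List.Forall (fun y => Rel y x) l.
Proof.
  induction l as [| y l IH]; simpl; intros H; [constructor |].
  apply StronglySorted_inv in H as [H Hy].
  constructor; [| now apply IH].
  apply Forall_app in Hy as [_ Hx]; now inversion Hx.
Qed.

Definition abs_coef_sum (l : list (R * R)) : R :=
  fold_right (fun cp acc => Rabs (fst cp) + acc) 0 l.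

Lemma abs_coef_sum_ge0 l : 0 <= abs_coef_sum l.
Proof. induction l as [| cp l IH]; simpl; [lra | pose proof (Rabs_pos (fst cp)); lra]. Qed.

Lemma gen_poly_abs_le l t e :
  0 < t -> List.Forall (fun cp => (snd cp - e) * ln t <= 0) l ->
  Rabs (gen_poly l t) <= abs_coef_sum l * Rpower t e.
Proof.
  intros Ht; induction l as [| cp l IH]; intros Hl; simpl.
  - rewrite Rabs_R0; lra.
  - inversion Hl as [| ? ? Hcp Hl']; subst.
    rewrite rpow_Rpower by exact Ht.
    pose proof (Rpower_le_exponent _ _ _ Ht Hcp).
    pose proof (Rabs_pos (fst cp)); pose proof (Rpower_pos t (snd cp)).
    eapply Rle_trans; [apply Rabs_triang |].
    rewrite Rabs_mult, (Rabs_right (Rpower t (snd cp))) by lra.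
    specialize (IH Hl'); nra.
Qed.

Lemma exponents_gt_uniformly (l : list (R * R)) a :
  List.Forall (fun cp => a < snd cp) l ->
  exists b, a < b /\ List.Forall (fun cp => b <= snd cp) l.
Proof.
  induction l as [| cp l IH]; intros Hl.
  - exists (a + 1); split; [lra | constructor].
  - inversion Hl as [| ? ? Hcp Hl']; subst.
    destruct (IH Hl') as (b & Hab & Hb).
    exists (Rmin b (snd cp)); split; [now apply Rmin_glb_lt |].
    constructor; [apply Rmin_r |].
    refine (Forall_impl _ _ Hb); intros; pose proof (Rmin_l b (snd cp)); lra.
Qed.

Lemma gen_poly_small_at_0 l a eps :
  0 < eps -> List.Forall (fun cp => a < snd cp) l ->
  exists d, 0 < d <= 1 /\
    forall t, 0 < t <= d -> Rabs (gen_poly l t) <= eps * Rpower t a.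
Proof.
  intros Heps Hl.
  destruct (exponents_gt_uniformly l a Hl) as (b & Hab & Hb).
  set (S := abs_coef_sum l); pose proof (abs_coef_sum_ge0 l) as HS; fold S in HS.
  set (u := eps / (S + 1)).
  assert (Hu : 0 < u) by (apply Rdiv_lt_0_compat; lra).
  exists (Rmin 1 (Rpower u (/ (b - a)))); split.
  { split; [apply Rmin_glb_lt; [lra | apply Rpower_pos] | apply Rmin_l]. }
  intros t Ht.
  pose proof (Rmin_l 1 (Rpower u (/ (b - a)))); pose proof (Rmin_r 1 (Rpower u (/ (b - a)))).
  assert (Hlnt : ln t <= 0) by (rewrite <- ln_1; apply ln_le; lra).
  assert (Hgp : Rabs (gen_poly l t) <= S * Rpower t b).
  { apply gen_poly_abs_le; [lra |].
    refine (Forall_impl _ _ Hb); intros; nra. }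
  assert (Hsmall : Rpower t (b - a) <= u) by (apply Rpower_le_below_root; lra).
  assert (HSu : S * u <= eps).
  { apply Rmult_le_reg_r with (S + 1); [lra |].
    replace (S * u * (S + 1)) with (S * eps) by (unfold u; field; lra); nra. }
  replace (Rpower t b) with (Rpower t (b - a) * Rpower t a) in Hgp
    by (rewrite <- Rpower_plus; f_equal; ring).
  assert (S * Rpower t (b - a) <= eps) by nra.
  pose proof (Rpower_pos t a); nra.
Qed.

Definition reflect_exponents (l : list (R * R)) : list (R * R) :=
  map (fun cp => (fst cp, - snd cp)) l.

Lemma gen_poly_reflect_exponents l t :
  0 < t -> gen_poly (reflect_exponents l) (/ t) = gen_poly l t.
Proof.
  intros Ht; induction l as [| cp l IH]; simpl; [reflexivity |].
  rewrite IH, !rpow_Rpower, Rpower_Rinv_opp by (auto; apply Rinv_0_lt_compat, Ht).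
  reflexivity.
Qed.

Lemma gen_poly_small_at_infty l A eps :
  0 < eps -> List.Forall (fun cp => snd cp < A) l ->
  exists T, 1 <= T /\
    forall t, T <= t -> Rabs (gen_poly l t) <= eps * Rpower t A.
Proof.
  intros Heps Hl.
  assert (Hr : List.Forall (fun cp => - A < snd cp) (reflect_exponents l)).
  { apply Forall_map; refine (Forall_impl _ _ Hl); simpl; intros; lra. }
  destruct (gen_poly_small_at_0 _ _ _ Heps Hr) as (d & Hd & Hsmall).
  exists (/ d); split.
  { rewrite <- Rinv_1; apply Rinv_le_contravar; lra. }
  intros t Ht.
  assert (Hd' : 0 < / d) by (apply Rinv_0_lt_compat; lra).
  assert (Ht' : 0 < / t <= d).
  { split; [apply Rinv_0_lt_compat; lra |].
    rewrite <- (Rinv_inv d); apply Rinv_le_contravar; lra. }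
  rewrite <- gen_poly_reflect_exponents, <- Rpower_Rinv_opp by lra.
  apply Hsmall, Ht'.
Qed.

Definition gen_poly_deriv (l : list (R * R)) : list (R * R) :=
  map (fun cp => (fst cp * snd cp, snd cp - 1)) l.

Lemma is_derive_rpow p t : 0 < t -> is_derive (fun s => rpow s p) t (p * rpow t (p - 1)).
Proof.
  intros Ht; rewrite rpow_Rpower by exact Ht.
  apply is_derive_ext_loc with (f := fun s => Rpower s p).
  - apply (filter_imp (fun s => 0 < s)); [| now apply open_gt].
    intros s Hs; now rewrite rpow_Rpower.
  - now apply is_derive_Reals, derivable_pt_lim_power.
Qed.

Lemma is_derive_gen_poly l t :
  0 < t -> is_derive (gen_poly l) t (gen_poly (gen_poly_deriv l) t).
Proof.
  intros Ht; induction l as [| cp l IH]; simpl.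
  - apply (is_derive_const (K := R_AbsRing) (V := R_NormedModule)).
  - replace (fst cp * snd cp * rpow t (snd cp - 1) + gen_poly (gen_poly_deriv l) t)
      with (fst cp * (snd cp * rpow t (snd cp - 1)) + gen_poly (gen_poly_deriv l) t)
      by ring.
    apply (is_derive_plus (K := R_AbsRing) (V := R_NormedModule)
             (fun s => fst cp * rpow s (snd cp))); [| exact IH].
    now apply is_derive_scal, is_derive_rpow.
Qed.

Lemma dominant_term_lower_bound f c u :
  0 < u -> 0 < f -> Rabs (f - c * u) <= Rabs c / 2 * u -> 0 < c /\ c / 2 * u <= f.
Proof.
  intros Hu Hf Hdom.
  pose proof (Rle_abs (f - c * u)); pose proof (Rabs_maj2 (f - c * u)).
  destruct (Rtotal_order c 0) as [Hc | [Hc | Hc]].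
  - rewrite (Rabs_left c) in Hdom by exact Hc; nra.
  - subst c; rewrite Rabs_R0 in Hdom; lra.
  - rewrite (Rabs_right c) in Hdom by lra; split; [exact Hc | lra].
Qed.

Section PowerLowerBounds.

Variable f : R -> R.
Hypothesis f_pos : forall t, 0 < t -> 0 < f t.
Hypothesis f_mono : forall x y, 0 < x -> x <= y -> f x <= f y.

Lemma power_lower_bound_at_0 g c a :
  0 <= a -> (forall t, 0 < t -> f t = c * Rpower t a + g t) ->
  (exists d, 0 < d <= 1 /\ forall t, 0 < t <= d -> Rabs (g t) <= Rabs c / 2 * Rpower t a) ->
  exists k, 0 < k /\ forall t, 0 < t <= 1 -> k * Rpower t a <= f t.
Proof.
  intros Ha Hf (d & Hd & Hg).
  assert (Hdom : forall t, 0 < t <= d -> 0 < c /\ c / 2 * Rpower t a <= f t).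
  { intros t Ht; apply dominant_term_lower_bound; [apply Rpower_pos | apply f_pos; lra |].
    rewrite Hf by lra; replace (c * Rpower t a + g t - c * Rpower t a) with (g t) by ring.
    now apply Hg. }
  assert (Hc : 0 < c) by apply (Hdom d ltac:(lra)).
  pose proof (f_pos d ltac:(lra)) as Hfd.
  pose proof (Rmin_l (c / 2) (f d)); pose proof (Rmin_r (c / 2) (f d)).
  set (k := Rmin (c / 2) (f d)) in *.
  assert (Hk : 0 < k) by (apply Rmin_glb_lt; lra).
  exists k; split; [exact Hk |].
  intros t Ht; pose proof (Rpower_pos t a).
  destruct (Rle_dec t d) as [Htd | Htd].
  - apply Rle_trans with (c / 2 * Rpower t a); [apply Rmult_le_compat_r; lra |].
    apply (Hdom t (conj (proj1 Ht) Htd)).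
  - assert (Rpower t a <= 1) by (rewrite <- (Rpower_O t) by lra; apply Rpower_le_exponent_le1; lra).
    pose proof (f_mono d t ltac:(lra) ltac:(lra)); nra.
Qed.

Lemma power_lower_bound_at_infty g C A :
  0 <= A -> (forall t, 0 < t -> f t = g t + C * Rpower t A) ->
  (exists T, 1 <= T /\ forall t, T <= t -> Rabs (g t) <= Rabs C / 2 * Rpower t A) ->
  exists k, 0 < k /\ forall t, 1 <= t -> k * Rpower t A <= f t.
Proof.
  intros HA Hf (T & HT & Hg).
  assert (Hdom : forall t, T <= t -> 0 < C /\ C / 2 * Rpower t A <= f t).
  { intros t Ht; apply dominant_term_lower_bound; [apply Rpower_pos | apply f_pos; lra |].
    rewrite Hf by lra; replace (g t + C * Rpower t A - C * Rpower t A) with (g t) by ring.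
    now apply Hg. }
  assert (HC : 0 < C) by apply (Hdom T ltac:(lra)).
  pose proof (f_pos 1 ltac:(lra)) as Hf1; pose proof (Rpower_pos T A) as HTA.
  pose proof (Rmin_l (C / 2) (f 1 / Rpower T A)); pose proof (Rmin_r (C / 2) (f 1 / Rpower T A)).
  set (k := Rmin (C / 2) (f 1 / Rpower T A)) in *.
  assert (Hk : 0 < k) by (apply Rmin_glb_lt; [lra | now apply Rdiv_lt_0_compat]).
  exists k; split; [exact Hk |].
  intros t Ht; pose proof (Rpower_pos t A).
  destruct (Rle_dec T t) as [HTt | HTt].
  - apply Rle_trans with (C / 2 * Rpower t A); [apply Rmult_le_compat_r; lra |].
    apply (Hdom t HTt).
  - assert (Rpower t A <= Rpower T A) by (apply Rle_Rpower_l; lra).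
    assert (f 1 / Rpower T A * Rpower T A = f 1) by (field; lra).
    pose proof (f_mono 1 t ltac:(lra) Ht).
    assert (k * Rpower t A <= f 1 / Rpower T A * Rpower T A)
      by (apply Rmult_le_compat; lra).
    lra.
Qed.

End PowerLowerBounds.

Lemma sorted_gen_poly_power_lower_bounds (f : R -> R) L :
  (forall t, 0 < t -> 0 < f t) -> (forall x y, 0 < x -> x <= y -> f x <= f y) ->
  L <> nil -> List.Forall proper_term L -> StronglySorted exponent_lt L ->
  (forall t, 0 < t -> f t = gen_poly L t) ->
  exists a A k, 0 < a /\ 0 < A /\ 0 < k /\
    List.Forall (fun cp => a <= snd cp <= A) L /\
    (forall t, 0 < t <= 1 -> k * Rpower t a <= f t) /\
    (forall t, 1 <= t -> k * Rpower t A <= f t).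
Proof.
  intros Hpos Hmono Hne Hp Hs Hf.
  destruct L as [| [c a] tl]; [congruence |].
  destruct (exists_last Hne) as (ini & [C A] & Hlast).
  inversion Hp as [| ? ? [Hc Ha] _]; subst; simpl in Hc, Ha.
  assert (Htl : List.Forall (fun cp => a < snd cp) tl) by apply (StronglySorted_inv Hs).
  rewrite Hlast in Hp, Hs, Hf.
  apply Forall_app in Hp as [_ HpA]; inversion HpA as [| ? ? [HC HA] _]; subst; simpl in HC, HA.
  apply StronglySorted_app_last in Hs as Hini.
  destruct (power_lower_bound_at_0 f Hpos Hmono (gen_poly tl) c a) as (k0 & Hk0 & Hlow).
  { lra. }
  { intros t Ht; rewrite Hf, <- Hlast by exact Ht; simpl; now rewrite rpow_Rpower. }
  { apply gen_poly_small_at_0; [apply Rabs_pos_lt in Hc; lra | exact Htl]. }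
  destruct (power_lower_bound_at_infty f Hpos Hmono (gen_poly ini) C A) as (k1 & Hk1 & Hhigh).
  { lra. }
  { intros t Ht; rewrite Hf, gen_poly_app by exact Ht; simpl.
    rewrite rpow_Rpower by exact Ht; ring. }
  { apply gen_poly_small_at_infty; [apply Rabs_pos_lt in HC; lra | exact Hini]. }
  pose proof (Rmin_l k0 k1); pose proof (Rmin_r k0 k1).
  exists a, A, (Rmin k0 k1); repeat split; try assumption.
  - now apply Rmin_glb_lt.
  - apply Forall_and.
    + constructor; [simpl; lra |].
      refine (Forall_impl _ _ Htl); intros; lra.
    + rewrite Hlast; apply Forall_app; split; [| constructor; simpl; [lra | constructor]].
      refine (Forall_impl _ _ Hini); unfold exponent_lt; simpl; intros; lra.
  - intros t Ht; pose proof (Rpower_pos t a); specialize (Hlow t Ht); nra.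
  - intros t Ht; pose proof (Rpower_pos t A); specialize (Hhigh t Ht); nra.
Qed.

Lemma gen_poly_deriv_power_bounds L a A :
  List.Forall (fun cp => a <= snd cp <= A) L ->
  exists E, 0 < E /\ forall t,
    (0 < t <= 1 -> gen_poly (gen_poly_deriv L) t <= E * Rpower t (a - 1)) /\
    (1 <= t -> gen_poly (gen_poly_deriv L) t <= E * Rpower t (A - 1)).
Proof.
  intros HL; set (D := gen_poly_deriv L).
  pose proof (abs_coef_sum_ge0 D) as HS.
  assert (HD : List.Forall (fun cp => a - 1 <= snd cp <= A - 1) D).
  { apply Forall_map; refine (Forall_impl _ _ HL); simpl; intros; lra. }
  exists (abs_coef_sum D + 1); split; [lra |]; intros t; split; intros Ht.
  - assert (ln t <= 0) by (rewrite <- ln_1; apply ln_le; lra).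
    assert (Hb : Rabs (gen_poly D t) <= abs_coef_sum D * Rpower t (a - 1)).
    { apply gen_poly_abs_le; [lra |]; refine (Forall_impl _ _ HD); intros; nra. }
    pose proof (Rle_abs (gen_poly D t)); pose proof (Rpower_pos t (a - 1)); nra.
  - assert (0 <= ln t) by (rewrite <- ln_1; apply ln_le; lra).
    assert (Hb : Rabs (gen_poly D t) <= abs_coef_sum D * Rpower t (A - 1)).
    { apply gen_poly_abs_le; [lra |]; refine (Forall_impl _ _ HD); intros; nra. }
    pose proof (Rle_abs (gen_poly D t)); pose proof (Rpower_pos t (A - 1)); nra.
Qed.

Lemma K_inf_pos f : K_inf f -> forall t, 0 < t -> 0 < f t.
Proof. intros (H0 & _ & _ & Hinc & _) t Ht; rewrite <- H0; apply Hinc; lra. Qed.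

Lemma K_inf_le f : K_inf f -> forall x y, 0 <= x -> x <= y -> f x <= f y.
Proof.
  intros (_ & _ & _ & Hinc & _) x y Hx [Hxy | <-]; [now left; apply Hinc | lra].
Qed.

Lemma is_derive_gen_poly_repr f l t :
  0 < t -> (forall s, 0 < s -> f s = gen_poly l s) ->
  is_derive f t (gen_poly (gen_poly_deriv l) t).
Proof.
  intros Ht Hf; apply is_derive_ext_loc with (f := gen_poly l).
  - apply (filter_imp (fun s => 0 < s)); [| now apply open_gt].
    intros s Hs; symmetry; now apply Hf.
  - now apply is_derive_gen_poly.
Qed.

Lemma K_P_ex_derive b : K_P b -> forall t, 0 < t -> ex_derive b t.
Proof.
  intros (_ & l & _ & Hl & _) t Ht; eexists.
  apply is_derive_gen_poly_repr; [exact Ht |]; intros s Hs; apply Hl; lra.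
Qed.

Lemma K_P_power_bounds b : K_P b ->
  exists a A k E, 0 < a /\ 0 < A /\ 0 < k /\ 0 < E /\
    (forall t, 0 < t <= 1 -> k * Rpower t a <= b t /\ Derive b t <= E * Rpower t (a - 1)) /\
    (forall t, 1 <= t -> k * Rpower t A <= b t /\ Derive b t <= E * Rpower t (A - 1)).
Proof.
  intros (Kb & l & Hl & Hbl & _).
  destruct (gen_poly_normal_form l Hl) as (L & HLp & HLs & HLv).
  assert (HbL : forall t, 0 < t -> b t = gen_poly L t)
    by (intros t Ht; rewrite HLv; apply Hbl; lra).
  assert (HLne : L <> nil).
  { intros ->; pose proof (K_inf_pos b Kb 1 ltac:(lra)); rewrite HbL in *; simpl in *; lra. }
  assert (Hmono : forall x y, 0 < x -> x <= y -> b x <= b y)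
    by (intros; apply (K_inf_le b Kb); lra).
  destruct (sorted_gen_poly_power_lower_bounds b L (K_inf_pos b Kb) Hmono HLne HLp HLs HbL)
    as (a & A & k & Ha & HA & Hk & HaA & Hlow & Hhigh).
  destruct (gen_poly_deriv_power_bounds L a A HaA) as (E & HE & Hder).
  assert (HDb : forall t, 0 < t -> Derive b t = gen_poly (gen_poly_deriv L) t)
    by (intros; now apply is_derive_unique, is_derive_gen_poly_repr).
  exists a, A, k, E; do 4 (split; [assumption |]).
  split; intros t Ht; split; auto; rewrite HDb by lra; apply Hder, Ht.
Qed.

Lemma Derive_inverse (f g : R -> R) lb ub x :
  lb < x < ub -> continuity_pt g x -> g lb <= g x <= g ub ->
  (forall y, lb <= y <= ub -> f (g y) = y) ->
  (forall y, g lb <= y <= g ub -> ex_derive f y) ->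
  Derive f (g x) <> 0 -> Derive g x = / Derive f (g x).
Proof.
  intros Hx Hcont Hgx Hfg Hf Hne.
  set (Prf := fun y Hy => ex_derive_Reals_0 f y (Hf y Hy)).
  rewrite <- (Derive_Reals f (g x) (Prf (g x) Hgx)) in *.
  apply is_derive_unique, is_derive_Reals.
  rewrite <- Rdiv_1_l.
  apply (Ranalysis5.derivable_pt_lim_recip_interv f g lb ub x Prf); try assumption.
  lra.
Qed.

Lemma continuity_pt_of_within_nonneg (g : R -> R) x : 0 < x ->
  filterlim g (within (fun y => 0 <= y) (locally x)) (locally (g x)) ->
  continuity_pt g x.
Proof.
  intros Hx Hg; apply continuity_pt_filterlim; intros P HP.
  specialize (Hg P HP); unfold filtermap, within in *.
  generalize (filter_and _ _ Hg (open_gt 0 x Hx)); apply filter_imp.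
  intros y [HPy Hy]; apply HPy; lra.
Qed.

Lemma K_Pinv_Derive gamma b :
  K_inf gamma -> K_P b -> (forall s, 0 <= s -> b (gamma s) = s) ->
  forall s, 0 < s -> Derive gamma s = / Derive b (gamma s).
Proof.
  intros Kg Kb Hbg s Hs.
  pose proof (K_inf_pos gamma Kg (s / 2) ltac:(lra)) as Hhalf.
  assert (Hder : forall t, 0 < t -> 0 < Derive b t)
    by (destruct Kb as (_ & _ & _ & _ & H); exact H).
  apply (Derive_inverse b gamma (s / 2) (2 * s)).
  - lra.
  - apply continuity_pt_of_within_nonneg; [exact Hs |]; apply Kg; lra.
  - split; apply (K_inf_le gamma Kg); lra.
  - intros y Hy; apply Hbg; lra.
  - intros y Hy; apply (K_P_ex_derive b Kb); lra.
  - apply Rgt_not_eq, Hder, (K_inf_pos gamma Kg s Hs).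
Qed.

Lemma Rpower_quotient_lower_bound t s D k E a p c :
  0 < t -> 0 < D -> 0 < k -> 0 < E -> 0 < p -> 0 < c ->
  k * Rpower t a <= s -> D <= E * Rpower t (a - 1) ->
  c * Rpower k p / E * Rpower t (a * p - a + 1) <= c * Rpower s p / D.
Proof.
  intros Ht HD Hk HE Hp Hc Hs HDE.
  pose proof (Rpower_pos t a); pose proof (Rpower_pos t (a - 1)); pose proof (Rpower_pos k p).
  assert (Hnum : Rpower k p * Rpower t (a * p) <= Rpower s p).
  { rewrite <- Rpower_mult, Rpower_mult_distr by (auto; apply Rpower_pos).
    apply Rle_Rpower_l; [lra | split; [apply Rmult_lt_0_compat |]; assumption]. }
  replace (c * Rpower k p / E * Rpower t (a * p - a + 1))
    with (c * (Rpower k p * Rpower t (a * p)) / (E * Rpower t (a - 1))).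
  2:{ replace (a * p - a + 1) with (a * p + - (a - 1)) by ring.
      rewrite Rpower_plus, Rpower_Ropp; field; lra. }
  apply Rle_trans with (c * Rpower s p / (E * Rpower t (a - 1))).
  - apply Rmult_le_compat_r; [apply Rlt_le, Rinv_0_lt_compat; nra | nra].
  - apply Rmult_le_compat_l; [pose proof (Rpower_pos s p); nra |].
    apply Rinv_le_contravar; lra.
Qed.

Lemma K_FxT_minorant (F : R -> R) K0 K1 r r' :
  0 < K0 -> 0 < K1 -> r < 1 -> 1 < r' ->
  (forall t, 0 < t <= 1 -> K0 * Rpower t r <= F t) ->
  (forall t, 1 <= t -> K1 * Rpower t r' <= F t) ->
  exists Psit, K_FxT Psit /\ forall t, 0 < t -> Psit t <= F t.
Proof.
  intros HK0 HK1 Hr Hr' Hlow Hhigh.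
  set (q := (1 + Rmax r 0) / 2).
  assert (Hq : 0 < q < 1 /\ r <= q).
  { pose proof (Rmax_l r 0); pose proof (Rmax_r r 0).
    assert (Rmax r 0 < 1) by (apply Rmax_lub_lt; lra); unfold q; lra. }
  set (k := Rmin K0 K1 / 2).
  pose proof (Rmin_l K0 K1); pose proof (Rmin_r K0 K1).
  assert (Hk : 0 < k) by (pose proof (Rmin_glb_lt K0 K1 0 HK0 HK1); unfold k; lra).
  exists (fun t => k * rpow t q + k * rpow t r'); split.
  { exists k, k, q, r'; repeat split; lra. }
  intros t Ht; rewrite !rpow_Rpower by exact Ht.
  pose proof (Rpower_pos t q); pose proof (Rpower_pos t r').
  destruct (Rle_dec t 1) as [Ht1 | Ht1].
  - pose proof (Rpower_le_exponent_le1 t r' q ltac:(lra) ltac:(lra)).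
    pose proof (Rpower_le_exponent_le1 t q r ltac:(lra) ltac:(lra)).
    specialize (Hlow t (conj Ht Ht1)); unfold k in *; nra.
  - pose proof (Rle_Rpower t q r' ltac:(lra) ltac:(lra)).
    specialize (Hhigh t ltac:(lra)); unfold k in *; nra.
Qed.

Lemma K_FxT_quotient_minorant (b d Psi : R -> R) a A k E :
  0 < a -> 0 < A -> 0 < k -> 0 < E -> K_FxT Psi ->
  (forall t, 0 < t -> 0 < d t) ->
  (forall t, 0 < t <= 1 -> k * Rpower t a <= b t /\ d t <= E * Rpower t (a - 1)) ->
  (forall t, 1 <= t -> k * Rpower t A <= b t /\ d t <= E * Rpower t (A - 1)) ->
  exists Psit, K_FxT Psit /\ forall t, 0 < t -> Psit t <= Psi (b t) / d t.
Proof.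
  intros Ha HA Hk HE (c1 & c2 & p1 & p2 & Hc1 & Hc2 & Hp1 & Hp2 & HPsi) Hd Hlow Hhigh.
  assert (Hterms : forall t, 0 < t -> 0 < b t ->
    c1 * Rpower (b t) p1 / d t <= Psi (b t) / d t /\
    c2 * Rpower (b t) p2 / d t <= Psi (b t) / d t).
  { intros t Ht Hbt.
    pose proof (Hd t Ht); pose proof (Rpower_pos (b t) p1); pose proof (Rpower_pos (b t) p2).
    rewrite HPsi, !rpow_Rpower by lra; unfold Rdiv; rewrite Rmult_plus_distr_r.
    assert (0 < / d t) by (apply Rinv_0_lt_compat; lra).
    assert (0 < c1 * Rpower (b t) p1 * / d t) by (repeat apply Rmult_lt_0_compat; lra).
    assert (0 < c2 * Rpower (b t) p2 * / d t) by (repeat apply Rmult_lt_0_compat; lra).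
    split; lra. }
  assert (Hkp : forall p, 0 < Rpower k p) by apply Rpower_pos.
  apply (K_FxT_minorant _ (c1 * Rpower k p1 / E) (c2 * Rpower k p2 / E)
           (a * p1 - a + 1) (A * p2 - A + 1)).
  - apply Rdiv_lt_0_compat; [apply Rmult_lt_0_compat |]; auto.
  - apply Rdiv_lt_0_compat; [apply Rmult_lt_0_compat |]; auto.
  - nra.
  - nra.
  - intros t Ht; destruct (Hlow t Ht) as [Hb HdE].
    pose proof (Rmult_lt_0_compat _ _ Hk (Rpower_pos t a)).
    eapply Rle_trans; [| apply (proj1 (Hterms t ltac:(lra) ltac:(lra)))].
    apply Rpower_quotient_lower_bound; auto; try lra; apply Hd; lra.
  - intros t Ht; destruct (Hhigh t Ht) as [Hb HdE].
    pose proof (Rmult_lt_0_compat _ _ Hk (Rpower_pos t A)).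
    eapply Rle_trans; [| apply (proj2 (Hterms t ltac:(lra) ltac:(lra)))].
    apply Rpower_quotient_lower_bound; auto; try lra; apply Hd; lra.
Qed.

Theorem lemma6 (gamma Psi : R -> R) :
  K_Pinv gamma -> K_FxT Psi ->
  exists (lambda : R) (Psit : R -> R),
    1 <= lambda /\ K_FxT Psit /\
    forall s, 0 < s ->
      lambda * rpow (gamma s) (lambda - 1) * Derive gamma s * Psi s
      >= Psit (rpow (gamma s) lambda).
Proof.
  intros (Kg & b & Kb & Hbg & _) KPsi.
  assert (Hdb : forall t, 0 < t -> 0 < Derive b t) by (destruct Kb as (_ & _ & _ & _ & H); exact H).
  destruct (K_P_power_bounds b Kb) as (a & A & k & E & Ha & HA & Hk & HE & Hlow & Hhigh).
  destruct (K_FxT_quotient_minorant b (Derive b) Psi a A k E Ha HA Hk HE KPsi Hdb Hlow Hhigh)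
    as (Psit & KPsit & HPsit).
  exists 1, Psit; split; [lra | split; [exact KPsit |]].
  intros s Hs.
  pose proof (K_inf_pos gamma Kg s Hs) as Ht.
  rewrite (K_Pinv_Derive gamma b Kg Kb Hbg s Hs), Rminus_diag, !rpow_Rpower, Rpower_O, Rpower_1
    by exact Ht.
  specialize (HPsit (gamma s) Ht); rewrite Hbg in HPsit by lra.
  unfold Rdiv in HPsit; lra.
Qed.
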